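(* For $n\ge2$ and all $P,Q\in\Gamma_n$, $D_{T\Delta}(P\|Q)\le 3D_{TJ}(P\|Q)$.
   Context: $\Gamma_n=\{P=(p_1,\dots,p_n): p_i>0,\ \sum p_i=1\}$. $\Delta(P\|Q)=\sum_{i=1}^n\frac{(p_i-q_i)^2}{p_i+q_i}$; $J(P\|Q)=\sum_{i=1}^n(p_i-q_i)\ln\frac{p_i}{q_i}$; $T(P\|Q)=\sum_{i=1}^n\frac{p_i+q_i}{2}\ln\frac{p_i+q_i}{2\sqrt{p_iq_i}}$. $D_{T\Delta}=T-\frac14\Delta$, $D_{TJ}=T-\frac18J$. *)

(* concrete reals R. Probability vectors are functions nat -> R,
   only the indices 0..n-1 matter. *)
From Stdlib Require Import Reals.
Open Scope R_scope.

Fixpoint sumn (n : nat) (f : nat -> R) : R :=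
  match n with
  | O => 0
  | S m => sumn m f + f m
  end.

Definition Gamma (n : nat) (p : nat -> R) : Prop :=
  (forall i, (i < n)%nat -> 0 < p i) /\ sumn n p = 1.

Definition Delta (n : nat) (p q : nat -> R) : R :=
  sumn n (fun i => (p i - q i) ^ 2 / (p i + q i)).

Definition Jdiv (n : nat) (p q : nat -> R) : R :=
  sumn n (fun i => (p i - q i) * ln (p i / q i)).

Definition Tdiv (n : nat) (p q : nat -> R) : R :=
  sumn n (fun i => (p i + q i) / 2 * ln ((p i + q i) / (2 * sqrt (p i * q i)))).

Definition D_TDelta (n : nat) (p q : nat -> R) : R := Tdiv n p q - Delta n p q / 4.
Definition D_TJ (n : nat) (p q : nat -> R) : R := Tdiv n p q - Jdiv n p q / 8.

(* Each summand of 3 D_TJ - D_TDelta is (p+q)/2 * gap u with u = (p-q)/(p+q) in (-1,1), where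
   gap u = -ln(1-u^2) - 3/4 u ln((1+u)/(1-u)) + u^2/2.  The function gap is even with gap 0 = 0,
   and on [0,1) its derivative is 3/4 of gap_slope u = 2u(3-2u^2)/(3(1-u^2)) - ln((1+u)/(1-u)),
   which vanishes at 0 and has derivative 4u^4/(3(1-u^2)^2) >= 0.  Hence the inequality holds
   termwise. *)
From Pilot Require Import Defs.
From Stdlib Require Import Reals Lra Lia.
From Coquelicot Require Import Coquelicot.
Open Scope R_scope.

Lemma sumn_nonneg (n : nat) (f : nat -> R) :
  (forall i, (i < n)%nat -> 0 <= f i) -> 0 <= sumn n f.
Proof.
  induction n as [|n IH]; intros Hf; simpl; [lra|].
  assert (0 <= f n) by (apply Hf; lia).
  assert (0 <= sumn n f) by (apply IH; intros i Hi; apply Hf; lia).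
  lra.
Qed.

Lemma le_of_derive_nonneg (f df : R -> R) (a x : R) :
  a <= x ->
  (forall t, a <= t <= x -> is_derive f t (df t)) ->
  (forall t, a < t < x -> 0 <= df t) ->
  f a <= f x.
Proof.
  intros Hax Hder Hdf.
  destruct (Req_dec a x) as [<-|Hne]; [lra|].
  destruct (MVT_cor2 f df a x) as [c [Hmvt Hc]]; [lra| |].
  - intros t Ht. apply is_derive_Reals, Hder, Ht.
  - specialize (Hdf c Hc). nra.
Qed.

Lemma ln_sqrt (x : R) : 0 < x -> ln (sqrt x) = ln x / 2.
Proof.
  intros Hx.
  assert (Hs : 0 < sqrt x) by now apply sqrt_lt_R0.
  rewrite <- (sqrt_sqrt x) at 2 by lra.
  rewrite ln_mult by exact Hs. lra.
Qed.

Definition log_ratio (u : R) : R := ln (1 + u) - ln (1 - u).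

Definition gap_slope (u : R) : R := 2 * u * (3 - 2 * u ^ 2) / (3 * (1 - u ^ 2)) - log_ratio u.

Definition gap (u : R) : R :=
  - (ln (1 + u) + ln (1 - u)) - 3 / 4 * u * log_ratio u + u ^ 2 / 2.

Lemma is_derive_gap_slope (u : R) :
  -1 < u < 1 -> is_derive gap_slope u (4 * u ^ 4 / (3 * (1 - u ^ 2) ^ 2)).
Proof.
  intros Hu. unfold gap_slope, log_ratio. auto_derive.
  - repeat split; nra.
  - assert (1 + - u <> 0) by lra. assert (1 + u <> 0) by lra.
    assert (1 + - (u * (u * 1)) <> 0) by nra. assert (1 - u ^ 2 <> 0) by nra.
    field. repeat split; assumption.
Qed.

Lemma gap_slope0 : gap_slope 0 = 0.
Proof. unfold gap_slope, log_ratio. rewrite Rplus_0_r, Rminus_0_r, ln_1. field. Qed.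

Lemma gap_slope_nonneg (u : R) : 0 <= u < 1 -> 0 <= gap_slope u.
Proof.
  intros Hu. rewrite <- gap_slope0.
  apply (le_of_derive_nonneg _ (fun t => 4 * t ^ 4 / (3 * (1 - t ^ 2) ^ 2))); [lra| |].
  - intros t Ht. apply is_derive_gap_slope. lra.
  - intros t Ht.
    assert (0 < (1 - t ^ 2) ^ 2) by (apply pow_lt; nra).
    assert (0 <= t ^ 4) by (apply pow_le; lra).
    apply Rmult_le_pos; [lra|]. apply Rlt_le, Rinv_0_lt_compat. lra.
Qed.

Lemma is_derive_gap (u : R) :
  -1 < u < 1 -> is_derive gap u (3 / 4 * gap_slope u).
Proof.
  intros Hu. unfold gap, gap_slope, log_ratio. auto_derive.
  - repeat split; nra.
  - assert (1 + - u <> 0) by lra. assert (1 + u <> 0) by lra.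
    assert (1 - u <> 0) by lra. assert (1 - u ^ 2 <> 0) by nra.
    replace (1 + - u) with (1 - u) by ring. field. repeat split; assumption.
Qed.

Lemma gap0 : gap 0 = 0.
Proof. unfold gap, log_ratio. rewrite Rplus_0_r, Rminus_0_r, ln_1. field. Qed.

Lemma gap_even (u : R) : gap (- u) = gap u.
Proof.
  unfold gap, log_ratio.
  replace (1 + - u) with (1 - u) by ring. replace (1 - - u) with (1 + u) by ring.
  field.
Qed.

Lemma gap_nonneg_pos (u : R) : 0 <= u < 1 -> 0 <= gap u.
Proof.
  intros Hu. rewrite <- gap0.
  apply (le_of_derive_nonneg _ (fun t => 3 / 4 * gap_slope t)); [lra| |].
  - intros t Ht. apply is_derive_gap. lra.
  - intros t Ht. assert (0 <= gap_slope t) by (apply gap_slope_nonneg; lra). lra.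
Qed.

Lemma gap_nonneg (u : R) : -1 < u < 1 -> 0 <= gap u.
Proof.
  intros Hu. destruct (Rle_dec 0 u).
  - apply gap_nonneg_pos. lra.
  - rewrite <- gap_even. apply gap_nonneg_pos. lra.
Qed.

Definition gap_summand (p q : R) : R :=
  2 * ((p + q) / 2 * ln ((p + q) / (2 * sqrt (p * q))))
  - 3 / 8 * ((p - q) * ln (p / q)) + (p - q) ^ 2 / (p + q) / 4.

Lemma triple_D_TJ_sub_D_TDelta (n : nat) (p q : nat -> R) :
  3 * D_TJ n p q - D_TDelta n p q = sumn n (fun i => gap_summand (p i) (q i)).
Proof.
  unfold D_TJ, D_TDelta, Tdiv, Jdiv, Defs.Delta, gap_summand.
  induction n as [|n IH]; cbn [sumn]; [lra|]. rewrite <- IH. lra.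
Qed.

Lemma gap_summand_eq (p q : R) :
  0 < p -> 0 < q -> gap_summand p q = (p + q) / 2 * gap ((p - q) / (p + q)).
Proof.
  intros Hp Hq. set (s := p + q). assert (Hs : 0 < s) by (unfold s; lra).
  assert (Hsq : 0 < sqrt (p * q)) by (apply sqrt_lt_R0; nra).
  unfold gap_summand, gap, log_ratio. fold s.
  replace (1 + (p - q) / s) with (2 * p / s) by (unfold s; field; lra).
  replace (1 - (p - q) / s) with (2 * q / s) by (unfold s; field; lra).
  rewrite !ln_div, !ln_mult, ln_sqrt, ln_mult by nra.
  field. lra.
Qed.

Theorem proposition5p6 (n : nat) (p q : nat -> R) :
  (2 <= n)%nat -> Gamma n p -> Gamma n q ->
  D_TDelta n p q <= 3 * D_TJ n p q.
Proof.
  intros _ [Hp _] [Hq _].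
  enough (0 <= 3 * D_TJ n p q - D_TDelta n p q) by lra.
  rewrite triple_D_TJ_sub_D_TDelta. apply sumn_nonneg. intros i Hi.
  specialize (Hp i Hi). specialize (Hq i Hi).
  rewrite gap_summand_eq by assumption.
  apply Rmult_le_pos; [lra|]. apply gap_nonneg.
  split; [apply Rlt_div_r | apply Rlt_div_l]; lra.
Qed.
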